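(* Let $x_1,\dots,x_m\in\mathbb{R}^n$ and $r_1,\dots,r_m\in\mathbb{R}^n$ be arbitrary vectors with $r_1,\dots,r_m$ affinely independent. Let $\Delta x_i=x_{i+1}-x_i$, $\Delta r_i=r_{i+1}-r_i$ for $i=1,\dots,m-1$, $\Delta X=[\Delta x_1,\dots,\Delta x_{m-1}]$, $\Delta R=[\Delta r_1,\dots,\Delta r_{m-1}]$. Then $\Delta R^{\mathrm T}\Delta R$ is invertible and $$x_1-\Delta X(\Delta R^{\mathrm T}\Delta R)^{-1}\Delta R^{\mathrm T}r_1=\bar x-\Phi\Psi^{+}\bar r,$$ with $\bar x,\bar r,\Phi,\Psi$ as in the context.
   Context: $\bar x=\frac1m\sum_{i=1}^m x_i$, $\bar r=\frac1m\sum_{i=1}^m r_i$, $\Phi=[x_1-\bar x,\dots,x_m-\bar x]\in\mathbb{R}^{n\times m}$, $\Psi=[r_1-\bar r,\dots,r_m-\bar r]\in\mathbb{R}^{n\times m}$, and $\Psi^{+}$ is the Moore–Penrose pseudoinverse of $\Psi$. Vectors $r_1,\dots,r_m$ are affinely independent if $r_2-r_1,\dots,r_m-r_1$ are linearly independent. *)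

From HB Require Import structures.
From mathcomp Require Import all_boot all_order all_algebra.
From mathcomp Require Import boolp reals.
Set Implicit Arguments. Unset Strict Implicit. Unset Printing Implicit Defensive.
Import Order.TTheory GRing.Theory Num.Theory.
Local Open Scope ring_scope.

Definition is_pinv (R : realType) (n k : nat) (A : 'M[R]_(n, k)) (P : 'M[R]_(k, n)) : Prop :=
  [/\ A *m P *m A = A, P *m A *m P = P, (A *m P)^T = A *m P & (P *m A)^T = P *m A].

Definition pinv (R : realType) (n k : nat) (A : 'M[R]_(n, k)) : 'M[R]_(k, n) :=
  match pselect (exists P, is_pinv A P) with
  | left h => proj1_sig (cid h)
  | right _ => 0
  end.

Definition affinely_independent (R : realType) (n m : nat) (r : 'I_m.+1 -> 'cV[R]_n) : bool :=
  row_free (\matrix_(i < m, a < n) (r (lift ord0 i) - r ord0) a 0).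

Definition cols_mat (R : realType) (n k : nat) (v : 'I_k -> 'cV[R]_n) : 'M[R]_(n, k) :=
  \matrix_(a < n, i < k) v i a 0.

Definition fdiff_mat (R : realType) (n m : nat) (x : 'I_m.+1 -> 'cV[R]_n) : 'M[R]_(n, m) :=
  cols_mat (fun i : 'I_m => x (lift ord0 i) - x (widen_ord (leqnSn m) i)).

Definition mean_col (R : realType) (n m : nat) (x : 'I_m.+1 -> 'cV[R]_n) : 'cV[R]_n :=
  (m.+1%:R)^-1 *: \sum_(i < m.+1) x i.

Definition centered_mat (R : realType) (n m : nat) (x : 'I_m.+1 -> 'cV[R]_n) : 'M[R]_(n, m.+1) :=
  cols_mat (fun i => x i - mean_col x).

From HB Require Import structures.
From mathcomp Require Import all_boot all_order all_algebra.
From mathcomp Require Import boolp reals.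
Set Implicit Arguments. Unset Strict Implicit. Unset Printing Implicit Defensive.
Import Order.TTheory GRing.Theory Num.Theory.
Local Open Scope ring_scope.

(* With X the matrix of columns x_i, every quantity in the statement is X times
   a fixed coefficient matrix: Delta X = X S for the difference matrix S,
   xbar = X u for the uniform weights u, Phi = X C for the centering projector
   C = I - u 1^T, and likewise for r.  Since C S = S and the columns of S span
   the range of C, Psi = R C has pseudoinverse S (Delta R^T Delta R)^-1 Delta R^T.
   The two sides then differ by X (u - e_1) minus its least-squares prediction
   from R (u - e_1), which vanishes because u - e_1 lies in the range of S.
   Invertibility of Delta R^T Delta R comes from affine independence: the edges
   r_(i+1) - r_1 are an invertible triangular recombination of the Delta r_i. *)

Section RealMatrices.
Variable R : realType.

Lemma mulmx_trmx_eq0 n (w : 'rV[R]_n) : w *m w^T = 0 -> w = 0.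
Proof.
move=> ww0; apply/rowP => i; rewrite mxE.
have := congr1 (fun M : 'M_1 => M 0 0) ww0; rewrite !mxE => sum0.
have sq_ge0 j : xpredT j -> 0 <= w 0 j * w^T j 0 by rewrite !mxE -expr2 sqr_ge0.
have := @psumr_eq0P _ _ xpredT _ sq_ge0 sum0 i isT.
by rewrite !mxE -expr2 => /eqP; rewrite sqrf_eq0 => /eqP.
Qed.

Lemma gram_unitmx n k (A : 'M[R]_(n, k)) : row_free A^T -> A^T *m A \in unitmx.
Proof.
move=> freeAt; rewrite -row_free_unit; apply/inj_row_free => v vAA0.
apply: (row_free_inj freeAt); rewrite mul0mx; apply: mulmx_trmx_eq0.
by rewrite trmx_mul trmxK mulmxA -(mulmxA v) vAA0 mul0mx.
Qed.

Lemma row_free_mulmxr k n (A : 'M[R]_k) (B : 'M[R]_(k, n)) :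
  row_free (A *m B) -> row_free B.
Proof. by rewrite -!row_leq_rank => /leq_trans; apply; exact: mxrankM_maxr. Qed.

Lemma is_pinv_unique n k (A : 'M[R]_(n, k)) (P Q : 'M[R]_(k, n)) :
  is_pinv A P -> is_pinv A Q -> P = Q.
Proof.
move=> [APA PAP AP_sym PA_sym] [AQA QAQ AQ_sym QA_sym].
have AP_AQ : A *m P = A *m Q.
  transitivity ((A *m P *m (A *m Q))^T); last by rewrite mulmxA APA AQ_sym.
  by rewrite trmx_mul AP_sym AQ_sym mulmxA AQA.
have PA_QA : P *m A = Q *m A.
  transitivity ((Q *m A *m (P *m A))^T).
    by rewrite trmx_mul PA_sym QA_sym -mulmxA (mulmxA A) AQA.
  by rewrite -mulmxA (mulmxA A) APA QA_sym.
by rewrite -PAP -mulmxA AP_AQ mulmxA PA_QA QAQ.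
Qed.

Lemma pinv_eq n k (A : 'M[R]_(n, k)) (P : 'M[R]_(k, n)) : is_pinv A P -> pinv A = P.
Proof.
move=> AP; rewrite /pinv; case: pselect => [ex|[]]; last by exists P.
exact: is_pinv_unique (proj2_sig (cid ex)) AP.
Qed.

End RealMatrices.

Section ProjectorPinv.
Variables (R : realType) (n p k : nat) (M : 'M[R]_(n, p)).
Variables (S : 'M[R]_(p, k)) (K : 'M[R]_(k, p)) (C : 'M[R]_p).
Hypotheses (C_sym : C^T = C) (CS : C *m S = S) (SK : S *m K = C).
Hypothesis gram_unit : (M *m S)^T *m (M *m S) \in unitmx.

Local Notation D := (M *m S).
Local Notation G := (invmx (D^T *m D)).

Lemma is_pinv_mulmx_proj : is_pinv (M *m C) (S *m G *m D^T).
Proof.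
have MC : M *m C = D *m K by rewrite -SK mulmxA.
have CC : C *m C = C by rewrite -{2}SK mulmxA CS SK.
have YMC : S *m G *m D^T *m (M *m C) = C.
  by rewrite MC mulmxA -(mulmxA (S *m G)) -(mulmxA S) mulVmx // mulmx1 SK.
have G_sym : G^T = G by rewrite trmx_inv trmx_mul trmxK.
split; first by rewrite -mulmxA YMC -mulmxA CC.
- by rewrite YMC !mulmxA CS.
- have -> : M *m C *m (S *m G *m D^T) = D *m G *m D^T.
    by rewrite !mulmxA -(mulmxA M C) CS.
  by rewrite trmx_mul [(D *m G)^T]trmx_mul trmxK G_sym mulmxA.
- by rewrite YMC.
Qed.

Lemma mulmx_pinv_shift q (X : 'M[R]_(q, p)) (a b : 'cV[R]_p) :
  C *m (b - a) = b - a ->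
  X *m a - X *m S *m G *m D^T *m (M *m a)
    = X *m b - X *m C *m pinv (M *m C) *m (M *m b).
Proof.
move=> Cba.
have XCY : X *m C *m (S *m G *m D^T) = X *m S *m G *m D^T.
  by rewrite !mulmxA -(mulmxA X C) CS.
rewrite (pinv_eq is_pinv_mulmx_proj) XCY.
set Y := X *m S *m G *m D^T.
have YDX w : Y *m (D *m w) = X *m S *m w.
  rewrite /Y mulmxA -(mulmxA (X *m S *m G)) -(mulmxA (X *m S)).
  by rewrite mulVmx // mulmx1.
have Xba : X *m (b - a) = Y *m (M *m (b - a)).
  by rewrite -Cba -SK -mulmxA (mulmxA M) YDX mulmxA.
rewrite -[X *m b](subrK (X *m a)) -mulmxBr Xba !mulmxBr.
by rewrite addrAC [_ - _ - _]addrAC subrr add0r addrC.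
Qed.

End ProjectorPinv.

Lemma sum_mul_delta (R : pzSemiRingType) k (f : 'I_k -> R) (j0 : 'I_k) :
  \sum_j f j * (j == j0)%:R = f j0.
Proof.
by rewrite (bigD1 j0) //= eqxx mulr1 big1 ?addr0 // => j /negbTE ->; rewrite mulr0.
Qed.

Lemma cols_mat_mulE (R : realType) n k p (v : 'I_k -> 'cV[R]_n) (A : 'M[R]_(k, p)) a i :
  (cols_mat v *m A) a i = \sum_j v j a 0 * A j i.
Proof. by rewrite mxE; apply: eq_bigr => j _; rewrite mxE. Qed.

Section Differences.
Variables (R : realType) (m : nat).

Definition diff_mx : 'M[R]_(m.+1, m) :=
  \matrix_(j, i) ((j == lift ord0 i)%:R - (j == widen_ord (leqnSn m) i)%:R).
Definition edge_mx : 'M[R]_(m.+1, m) :=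
  \matrix_(j, i) ((j == lift ord0 i)%:R - (j == ord0)%:R).
Definition drop0_mx : 'M[R]_(m, m.+1) := \matrix_(i, j) (j == lift ord0 i)%:R.
Definition ones : 'cV[R]_m.+1 := const_mx 1.
Definition mean_weights : 'cV[R]_m.+1 := (m.+1%:R)^-1 *: ones.
Definition center_mx : 'M[R]_m.+1 := 1%:M - mean_weights *m ones^T.

Local Notation e0 := (delta_mx ord0 0 : 'cV[R]_m.+1).

Lemma edge_mx_drop0 : edge_mx *m drop0_mx = 1%:M - e0 *m ones^T.
Proof.
apply/matrixP => j k; rewrite !mxE big_ord1 !mxE eqxx andbT mulr1.
case: (unliftP ord0 k) => [k'|] ->.
  under eq_bigr => i _ do rewrite [drop0_mx _ _]mxE (inj_eq lift_inj) eq_sym.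
  by rewrite sum_mul_delta mxE.
rewrite big1 ?subrr // => i _.
by rewrite [drop0_mx _ _]mxE (negbTE (neq_lift _ _)) mulr0.
Qed.

Lemma ones_diff : ones^T *m diff_mx = 0.
Proof.
apply/matrixP => a i; rewrite !mxE.
under eq_bigr => j _ do rewrite !mxE mulrBr.
by rewrite sumrB !(sum_mul_delta (fun _ => 1)) subrr.
Qed.

Lemma ones_mean : ones^T *m mean_weights = 1%:M.
Proof.
apply/matrixP => a b; rewrite !ord1 !mxE.
under eq_bigr => j _ do rewrite !mxE mul1r mulr1.
by rewrite sumr_const card_ord -[_ *+ m.+1]mulr_natr mulVf ?pnatr_eq0.
Qed.

Lemma ones_delta0 : ones^T *m e0 = 1%:M.
Proof. by rewrite -colE; apply/matrixP => a b; rewrite !ord1 !mxE. Qed.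

Definition diff_tail : 'M[R]_m := drop0_mx *m diff_mx.

Lemma diff_mx_edge : diff_mx = edge_mx *m diff_tail.
Proof.
by rewrite mulmxA edge_mx_drop0 mulmxBl mul1mx -mulmxA ones_diff mulmx0 subr0.
Qed.

Lemma diff_tailE k i : diff_tail k i = diff_mx (lift ord0 k) i.
Proof.
rewrite mxE; under eq_bigr => j _ do rewrite [drop0_mx _ _]mxE mulrC.
by rewrite sum_mul_delta.
Qed.

Lemma diff_tail_unit : diff_tail \in unitmx.
Proof.
rewrite unitmxE -det_tr det_trig.
  rewrite big1 ?unitr1 // => i _; rewrite mxE diff_tailE mxE eqxx.
  suff -> : (lift ord0 i == widen_ord (leqnSn m) i) = false by rewrite subr0.
  by apply/negbTE; rewrite -val_eqE /= /bump leq0n add1n neq_ltn ltnSn orbT.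
apply/is_trig_mxP => i j lt_ji; rewrite mxE diff_tailE mxE (inj_eq lift_inj).
have -> : (j == i) = false by rewrite -val_eqE /= gtn_eqF.
suff -> : (lift ord0 j == widen_ord (leqnSn m) i) = false by rewrite subrr.
apply/negbTE; rewrite -val_eqE /= /bump leq0n add1n neq_ltn.
by rewrite (ltn_trans lt_ji (ltnSn j)) orbT.
Qed.

Lemma ones_center : ones^T *m center_mx = 0.
Proof. by rewrite mulmxBr mulmx1 mulmxA ones_mean mul1mx subrr. Qed.

Lemma center_mx_sym : center_mx^T = center_mx.
Proof.
rewrite /center_mx linearB /= trmx1 trmx_mul trmxK /mean_weights linearZ /=.
by rewrite -scalemxAr scalemxAl.
Qed.

Lemma center_diff : center_mx *m diff_mx = diff_mx.
Proof. by rewrite mulmxBl mul1mx -mulmxA ones_diff mulmx0 subr0. Qed.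

Lemma diff_center : diff_mx *m (invmx diff_tail *m drop0_mx *m center_mx) = center_mx.
Proof.
rewrite diff_mx_edge -mulmxA [diff_tail *m _]mulmxA mulKVmx ?diff_tail_unit //.
by rewrite mulmxA edge_mx_drop0 mulmxBl mul1mx -mulmxA ones_center mulmx0 subr0.
Qed.

Lemma center_shift : center_mx *m (mean_weights - e0) = mean_weights - e0.
Proof.
by rewrite mulmxBl mul1mx -mulmxA mulmxBr ones_mean ones_delta0 subrr mulmx0 subr0.
Qed.

Lemma gram_diff_unit n (M : 'M[R]_(n, m.+1)) :
  row_free (M *m edge_mx)^T -> (M *m diff_mx)^T *m (M *m diff_mx) \in unitmx.
Proof.
have -> : edge_mx = diff_mx *m invmx diff_tail.
  by rewrite diff_mx_edge mulmxK ?diff_tail_unit.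
by rewrite mulmxA trmx_mul => /row_free_mulmxr/gram_unitmx.
Qed.

Section Columns.
Variables (n : nat) (x : 'I_m.+1 -> 'cV[R]_n).

Lemma fdiff_matE : fdiff_mat x = cols_mat x *m diff_mx.
Proof.
apply/matrixP => a i; rewrite cols_mat_mulE !mxE.
under eq_bigr => j _ do rewrite mxE mulrBr.
by rewrite sumrB !sum_mul_delta.
Qed.

Lemma cols_mat_ord0 : x ord0 = cols_mat x *m e0.
Proof. by rewrite -colE; apply/colP => a; rewrite !mxE. Qed.

Lemma mean_colE : mean_col x = cols_mat x *m mean_weights.
Proof.
apply/colP => a; rewrite cols_mat_mulE !mxE summxE mulrC mulr_suml.
by apply: eq_bigr => j _; rewrite !mxE mulr1.
Qed.

Lemma centered_matE : centered_mat x = cols_mat x *m center_mx.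
Proof.
rewrite mulmxBr mulmx1 mulmxA -mean_colE; apply/matrixP => a i.
by rewrite !mxE big_ord1 !mxE mulr1.
Qed.

Lemma affinely_independentE :
  affinely_independent x = row_free (cols_mat x *m edge_mx)^T.
Proof.
congr row_free; apply/matrixP => i a; rewrite mxE [RHS]mxE cols_mat_mulE !mxE.
under eq_bigr => j _ do rewrite mxE mulrBr.
by rewrite sumrB !sum_mul_delta.
Qed.

End Columns.
End Differences.

Theorem mainTheorem3 (R : realType) (n m : nat) (x r : 'I_m.+1 -> 'cV[R]_n) :
  affinely_independent r ->
  ((fdiff_mat r)^T *m fdiff_mat r \in unitmx) /\
  x ord0 - fdiff_mat x *m invmx ((fdiff_mat r)^T *m fdiff_mat r) *m (fdiff_mat r)^T *m r ord0
    = mean_col x - centered_mat x *m pinv (centered_mat r) *m mean_col r.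
Proof.
rewrite affinely_independentE => /gram_diff_unit gram_unit.
rewrite !fdiff_matE; split; first exact: gram_unit.
rewrite (cols_mat_ord0 x) (cols_mat_ord0 r) !mean_colE !centered_matE.
exact: (mulmx_pinv_shift (center_mx_sym R m) (center_diff R m) (diff_center R m)
          gram_unit _ (center_shift R m)).
Qed.
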